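(* Let $X$ and $V$ be independent random variables, where $V\sim\mathcal N(0,\sigma^2)$ and $X\le_{df}(d,w,o)$ for some nonzero $d$ and nonnegative $w,o$ with $|d|>w$. Then $$\mathbb E[(X-Q_d(X+V))^2]\le\mathbb E[(X-Q_d(X))^2]+\sum_{i=1}^{\infty}\Big(i|d|+\frac w2\Big)^2\cdot 2Q\Big(\frac{(2i-1)|d|-w}{2\sigma}\Big)+o\cdot\Big(\big(d+\tfrac d2\big)^2+\sum_{i=2}^{\infty}\big(id+\tfrac d2\big)^2\cdot 2Q\Big(\frac{(i-1)|d|}{\sigma}\Big)\Big).$$
   Context: For $x\neq0$ and real $y$, $Q_x(y)=x\lfloor y/x+1/2\rfloor$ (quantization) and $R_x(y)=y-Q_x(y)$. The unsubscripted $Q$ denotes the Gaussian tail function $Q(x)=\frac1{\sqrt{2\pi}}\int_x^\infty e^{-u^2/2}\,du$. For a random variable $X$, nonzero $d$ and nonnegative reals $w,o$ with $|d|>w$, write $X\le_{df}(d,w,o)$ if $\mathbb P\{X\notin\bigcup_{i\in\mathbb Z}[id-\frac w2,id+\frac w2]\}\le o$. *)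

From HB Require Import structures.
From mathcomp Require Import all_boot all_order all_algebra.
From mathcomp Require Import all_classical all_reals all_analysis.
Set Implicit Arguments. Unset Strict Implicit. Unset Printing Implicit Defensive.
Import Order.TTheory GRing.Theory Num.Theory.
Import numFieldNormedType.Exports.
Local Open Scope classical_set_scope.
Local Open Scope ring_scope.

Definition quant {R : realType} (x y : R) : R :=
  x * (Num.floor (y / x + 2^-1))%:~R.

Definition qrem {R : realType} (x y : R) : R := y - quant x y.

(* Gaussian tail function Q(x) = 1/sqrt(2 pi) * int_x^oo exp(-u^2/2) du
   (extended-real valued; it is always finite) *)
Definition gaussQ {R : realType} (x : R) : \bar R :=
  ((Num.sqrt (pi *+ 2))^-1)%:E *
  (\int[@lebesgue_measure R]_(u in `[x, +oo[) (expR (- (u ^+ 2) / 2))%:E)%E.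

Definition le_df {dT} {T : measurableType dT} {R : realType}
  (P : probability T R) (X : T -> R) (d w o : R) : Prop :=
  (P [set t | ~ (exists i : int, (i%:~R * d - w / 2 <= X t <= i%:~R * d + w / 2)%R)]
  <= o%:E)%E.

Definition indep2 {dT} {T : measurableType dT} {R : realType}
  (P : probability T R) (X Y : T -> R) : Prop :=
  forall A B : set R, measurable A -> measurable B ->
    P (X @^-1` A `&` Y @^-1` B) = (P (X @^-1` A) * P (Y @^-1` B))%E.

From HB Require Import structures.
From mathcomp Require Import all_boot all_order all_algebra.
From mathcomp Require Import all_classical all_reals all_analysis.
From mathcomp Require Import measurable_realfun ring lra.
Import Order.TTheory GRing.Theory Num.Theory.
Import numFieldNormedType.Exports.
Local Open Scope classical_set_scope.
Local Open Scope ring_scope.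

(* Write e = X - Q_d(X + V).  If X lies in the cell [k d - w/2, k d + w/2] and
   X + V is rounded to (k + j) d with |j| = i >= 1, then |e| <= i |d| + w/2 while
   |V| >= ((2 i - 1) |d| - w) / 2.  Without the cell hypothesis still
   |e| <= |d|/2 + |V|, so |e| <= 3|d|/2 when |V| < |d| and |e| <= i |d| + |d|/2
   when (i - 1) |d| <= |V| < i |d|.  Hence e^2 is dominated by a series of
   constants times indicators of the events [|V| >= c] and
   [X off the cells] /\ [|V| >= c].  Integrating term by term,
   P[|V| >= c] = 2 Q(c / sigma) by symmetry of the normal law, and independence
   together with P[X off the cells] <= o yields the factor o. *)

Section gaussian_tail.
Context {R : realType}.
Local Open Scope ereal_scope.

Lemma gaussQ_ge0 (x : R) : 0 <= gaussQ x.
Proof.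
rewrite /gaussQ; apply: mule_ge0; first by rewrite lee_fin invr_ge0 sqrtr_ge0.
by apply: integral_ge0 => y _; rewrite lee_fin expR_ge0.
Qed.

Lemma integral_normal_pdf_itvcy (s c : R) : (0 < s)%R ->
  \int[@lebesgue_measure R]_(x in `[c, +oo[) (normal_pdf 0 s x)%:E = gaussQ (c / s).
Proof.
move=> s0; have sN0 : s != 0%R by rewrite gt_eqF.
have scale_der : (fun x => s * x)%R^`()%classic = cst s.
  apply/funext => x; rewrite derive1E deriveM// derive_cst derive_id.
  by rewrite scaler0 addr0 /GRing.scale/= mulr1.
rewrite {1}(_ : c = s * (c / s))%R; last by rewrite mulrC divfK.
rewrite increasing_ge0_integration_by_substitutiony //; first last.
- by move=> x _; exact: normal_pdf_ge0.
- exact/continuous_subspaceT/continuous_normal_pdf.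
- by apply: (@gt0_cvgMry _ _ _ s id) => //; exact: cvg_id.
- split; first by move=> x _; exact: derivableM.
  by apply: cvg_at_right_filter; apply: cvgM; [exact: cvg_cst|exact: cvg_id].
- by rewrite scale_der; exact: is_cvg_cst.
- by rewrite scale_der; exact: is_cvg_cst.
- by rewrite scale_der => x _; exact: cst_continuous.
- by move=> x y _ _; rewrite ltr_pM2l.
rewrite scale_der /gaussQ -ge0_integralZl_EFin //; last first.
  apply/measurable_EFinP; apply: measurable_funTS.
  apply: continuous_measurable_fun => x.
  apply: continuous_comp; last exact: continuous_expR.
  by apply: continuousM; [apply: continuousN; exact: sqr_continuous|exact: cst_continuous].
apply: eq_integral => x _; congr EFin.
rewrite /= normal_pdfE // /normal_peak /normal_fun !fctE /= subr0.
have sqrt2pi_neq0 : (Num.sqrt (pi *+ 2) != 0 :> R)%R.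
  by rewrite gt_eqF // sqrtr_gt0 pmulrn_lgt0 // pi_gt0.
have -> : (- (s * x) ^+ 2 / (s ^+ 2 *+ 2) = - x ^+ 2 / 2)%R.
  by rewrite -mulr_natr; field.
rewrite -mulrnAr sqrtrM ?sqr_ge0 // sqrtr_sqr ger0_norm ?ltW //.
by field; rewrite sN0 sqrt2pi_neq0.
Qed.

Lemma normr_ge_set (c : R) :
  [set x : R | (c <= `|x|)%R] = `]-oo, (- c)%R] `|` `[c, +oo[.
Proof.
apply/seteqP; split => x /=; rewrite !in_itv /= andbT ler_normr lerNr.
  by case/orP; [right|left].
by case=> ->; rewrite ?orbT.
Qed.

Lemma measurable_normr_ge (c : R) : measurable [set x : R | (c <= `|x|)%R].
Proof. by rewrite normr_ge_set; apply: measurableU; exact: measurable_itv. Qed.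

Lemma normal_prob_normr_ge (s c : R) : (0 < s)%R -> (0 < c)%R ->
  normal_prob 0 s [set x : R | (c <= `|x|)%R] = 2%:E * gaussQ (c / s).
Proof.
move=> s0 c0; rewrite normr_ge_set /normal_prob ge0_integral_setU //; last 3 first.
- by apply/measurable_EFinP/measurable_funTS; exact: measurable_normal_pdf.
- by move=> x _; rewrite lee_fin normal_pdf_ge0.
- apply/disj_setPS => x [] /=; rewrite !in_itv /= andbT => h1 h2.
  by have := le_trans h2 h1; lra.
rewrite ge0_integration_by_substitutionNy; last 2 first.
- exact/continuous_subspaceT/continuous_normal_pdf/lt0r_neq0.
- by move=> x _; exact: normal_pdf_ge0.
have -> : \int[lebesgue_measure]_(x in `[c, +oo[) ((normal_pdf 0 s \o -%R) x)%:E =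
    \int[lebesgue_measure]_(x in `[c, +oo[) (normal_pdf 0 s x)%:E.
  apply: eq_integral => x _; congr EFin.
  by rewrite /= !normal_pdfE ?gt_eqF // /normal_fun !subr0 sqrrN.
by rewrite integral_normal_pdf_itvcy // -mule2n mule_natl.
Qed.

End gaussian_tail.

Lemma sqr_le_of_normr_le {R : realDomainType} (a b : R) : `|a| <= b -> a ^+ 2 <= b ^+ 2.
Proof.
move=> ab; rewrite -real_normK ?num_real //.
by apply: lerXn2r => //; rewrite nnegrE ?normr_ge0 ?(le_trans _ ab).
Qed.

Section quantization.
Context {R : realType}.
Implicit Types (d w x v : R).

Lemma measurable_quant d : measurable_fun setT (quant d).
Proof.
apply: measurable_funM => //.
have mfloor : measurable_fun setT (fun z : R => (Num.floor z)%:~R : R).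
  by apply: nondecreasing_measurable => // a b ab; rewrite ler_int le_floor.
apply: measurableT_comp mfloor _.
by apply: measurable_funD => //; exact: mulrr_measurable.
Qed.

Lemma measurable_qrem d : measurable_fun setT (qrem d).
Proof. by apply: measurable_funB => //; exact: measurable_quant. Qed.

Lemma measurable_qrem_gt d w : measurable [set x | w < `|qrem d x|].
Proof.
rewrite -[X in measurable X]preimage_itvoy -[_ @^-1` _]setTI.
by apply: measurableT_comp => //; exact: measurable_qrem.
Qed.

Lemma qrem_abs_le d x : d != 0 -> `|qrem d x| <= `|d| / 2.
Proof.
move=> d0; rewrite /qrem /quant.
have := floor_itv (x / d + 2^-1); rewrite intrD.
set k := ((Num.floor _)%:~R) => /andP[lo hi].
have -> : x - d * k = d * ((x / d + 2^-1 - k) - 2^-1) by field.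
rewrite normrM ler_pM2l ?normr_gt0 // ler_norml; apply/andP; split; lra.
Qed.

Lemma quant_grid d x (k : int) : d != 0 -> `|x - k%:~R * d| < `|d| / 2 ->
  quant d x = k%:~R * d.
Proof.
move=> d0 near_k; rewrite /quant mulrC; congr (_ * _); congr intmul.
have e : x - k%:~R * d = d * (x / d - k%:~R) by field.
move: near_k; rewrite e normrM ltr_pM2l ?normr_gt0 // ltr_norml => /andP[lo hi].
by apply: floor_def; rewrite intrD; apply/andP; split; lra.
Qed.

(* The cells [i d - w/2, i d + w/2] are disjoint since w < |d|, so x lies in one
   of them exactly when it lies in the cell of its own quantization point. *)
Lemma not_in_cells_qrem d w : d != 0 -> w < `|d| ->
  [set x | ~ exists i : int, i%:~R * d - w / 2 <= x <= i%:~R * d + w / 2] =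
  [set x | w / 2 < `|qrem d x|].
Proof.
move=> d0 wd; apply/seteqP; split => x /=.
  move=> notin; rewrite ltNge; apply/negP => near; apply: notin.
  exists (Num.floor (x / d + 2^-1)).
  by move: near; rewrite /qrem /quant ler_norml mulrC => /andP[lo hi]; lra.
move=> far [i /andP[lo hi]].
have qi : quant d x = i%:~R * d.
  by apply: quant_grid => //; rewrite ltr_norml; apply/andP; split; lra.
by move: far; rewrite /qrem qi ltNge ler_norml; apply/negP/negPn/andP; split; lra.
Qed.

Lemma sqr_quantD_err d x v : d != 0 ->
  (x - quant d (x + v)) ^+ 2 <= (d + d / 2) ^+ 2 \/
  exists2 i : nat, (1 < i)%N &
    (x - quant d (x + v)) ^+ 2 <= (i%:R * d + d / 2) ^+ 2 /\ (i%:R - 1) * `|d| <= `|v|.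
Proof.
move=> d0; have dp : 0 < `|d| by rewrite normr_gt0.
have err_le : `|x - quant d (x + v)| <= `|d| / 2 + `|v|.
  have -> : x - quant d (x + v) = qrem d (x + v) - v by rewrite /qrem; ring.
  by apply: le_trans (ler_normB _ _) _; rewrite lerD2r qrem_abs_le.
have [small|large] := ltP `|v| `|d|.
  left; rewrite -[(d + d / 2) ^+ 2](real_normK (num_real _)).
  apply: sqr_le_of_normr_le; have -> : d + d / 2 = d * (3 / 2) by field.
  by rewrite normrM (ger0_norm (x := 3 / 2)); lra.
have := truncn_itv (divr_ge0 (normr_ge0 v) (ltW dp)); set t := Num.truncn _.
move=> /andP[lo hi]; have t0 : (0 < t)%N.
  by rewrite lt0n; apply/eqP => t0; move: hi; rewrite t0 ltr_pdivrMr // mul1r; lra.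
right; exists t.+1 => //.
have {}lo : t%:R * `|d| <= `|v| by rewrite -ler_pdivlMr.
have {}hi : `|v| < t.+1%:R * `|d| by rewrite -ltr_pdivrMr.
split; last by rewrite -addn1 natrD addrK.
rewrite -[(_ + d / 2) ^+ 2](real_normK (num_real _)); apply: sqr_le_of_normr_le.
have -> : t.+1%:R * d + d / 2 = d * (t.+1%:R + 2^-1) by field.
rewrite normrM (ger0_norm (x := _ + 2^-1)); last by rewrite addr_ge0.
by rewrite -addn1 natrD in hi *; lra.
Qed.

Lemma sqr_quantD_err_in_cell d w x v : d != 0 -> `|qrem d x| <= w / 2 ->
  x - quant d (x + v) = qrem d x \/
  exists2 i : nat, (0 < i)%N &
    (x - quant d (x + v)) ^+ 2 <= (i%:R * `|d| + w / 2) ^+ 2 /\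
    ((i%:R *+ 2 - 1) * `|d| - w) / 2 <= `|v|.
Proof.
move=> d0 in_cell.
have := qrem_abs_le d (x + v) d0; move: in_cell; rewrite /qrem /quant.
set n := Num.floor ((x + v) / d + 2^-1); set k := Num.floor (x / d + 2^-1).
move=> in_cell qremD_le; have [->|nk] := eqVneq n k; first by left.
right; exists `|n - k|%N; first by rewrite absz_gt0 subr_eq0.
have jump : `|d * (n - k)%:~R| = `|n - k|%N%:R * `|d|.
  by rewrite normrM natr_absz intr_norm mulrC.
set i := `|n - k|%N in jump *.
have errE : x - d * n%:~R = (x - d * k%:~R) - d * (n - k)%:~R.
  by rewrite intrB; ring.
have jumpE : d * (n - k)%:~R = v - ((x + v) - d * n%:~R) + (x - d * k%:~R).
  by rewrite intrB; ring.
split.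
  by apply: sqr_le_of_normr_le; rewrite errE; apply: le_trans (ler_normB _ _) _; lra.
have := ler_normD (v - ((x + v) - d * n%:~R)) (x - d * k%:~R).
have := ler_normB v ((x + v) - d * n%:~R).
by rewrite -jumpE jump -mulr_natr; lra.
Qed.

End quantization.

Section nneseries_from.
Context {R : realType}.
Local Open Scope ereal_scope.

Lemma eseries_from_mkcond (f : (\bar R)^nat) N :
  \sum_(N <= i <oo) f i = \sum_(i <oo) if (N <= i)%N then f i else 0.
Proof. by rewrite eseries_cond eseries_mkcond. Qed.

Lemma nneseries_ge_term {u : (\bar R)^nat} {N k : nat} :
  (forall n, (N <= n)%N -> 0 <= u n) -> (N <= k)%N -> u k <= \sum_(N <= n <oo) u n.
Proof.
move=> u0 Nk; apply: le_trans (nneseries_lim_ge k.+1 (fun n Nn _ => u0 n Nn)).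
rewrite big_nat_recr //= leeDr // big_nat_cond.
by apply: sume_ge0 => i /andP[/andP[Ni _] _]; exact: u0.
Qed.

End nneseries_from.

Section integral_nneseries_from.
Context {d} {T : measurableType d} {R : realType}.
Variables (mu : {measure set T -> \bar R}) (D : set T) (f : (T -> \bar R)^nat) (N : nat).
Hypothesis mD : measurable D.
Hypothesis mf : forall n, (N <= n)%N -> measurable_fun D (f n).
Hypothesis f0 : forall n x, (N <= n)%N -> D x -> (0 <= f n x)%E.
Local Open Scope ereal_scope.

Let g n x := if (N <= n)%N then f n x else 0.

Let mg n : measurable_fun D (g n).
Proof.
by rewrite /g; have [Nn|_] := boolP (N <= n)%N; [exact: mf|exact: measurable_cst].
Qed.

Let g0 n x : D x -> 0 <= g n x.
Proof. by move=> Dx; rewrite /g; case: ifP => // Nn; exact: f0. Qed.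

Lemma measurable_nneseries_from : measurable_fun D (fun x => \sum_(N <= n <oo) f n x).
Proof.
have := ge0_emeasurable_sum (fun k x Dx (_ : k \in xpredT) => g0 k x Dx) (fun k _ => mg k).
by congr (measurable_fun _ _); apply/funext => x; rewrite eseries_from_mkcond.
Qed.

Lemma integral_nneseries_from :
  \int[mu]_(x in D) \sum_(N <= n <oo) f n x = \sum_(N <= n <oo) \int[mu]_(x in D) f n x.
Proof.
under eq_integral do rewrite eseries_from_mkcond.
rewrite (integral_nneseries _ mD mg g0) [RHS]eseries_from_mkcond.
by apply: eq_eseriesr => n _; rewrite /g; case: ifP => // _; rewrite integral0.
Qed.

End integral_nneseries_from.

Lemma integral_cst_indic {d} {T : measurableType d} {R : realType}
    (mu : {measure set T -> \bar R}) (c : R) (S : set T) :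
  0 <= c -> measurable S -> (\int[mu]_t (c * \1_S t)%:E = c%:E * mu S)%E.
Proof.
move=> c0 mS; under eq_integral do rewrite EFinM.
rewrite ge0_integralZl_EFin //; first by rewrite integral_indic // setIT.
by apply/measurable_EFinP; exact: measurable_indic.
Qed.

Section noisy_quantization.
Context {dT : measure_display} {T : measurableType dT} {R : realType}.
Context {P : probability T R} {X V : {RV P >-> R}} {sigma d w o : R}.
Hypothesis sigma_gt0 : 0 < sigma.
Hypothesis V_normal :
  forall A : set R, measurable A -> distribution P V A = normal_prob 0 sigma A.
Hypothesis XV_indep : indep2 P X V.
Hypothesis d_neq0 : d != 0.
Hypothesis w_lt_d : w < `|d|.
Hypothesis X_df : le_df P X d w o.

Local Open Scope ereal_scope.

Definition offgrid : set T := X @^-1` [set x | (w / 2 < `|qrem d x|)%R].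

Definition noise_tail (c : R) : set T := V @^-1` [set v | (c <= `|v|)%R].

Definition err_bound0 (t : T) : \bar R :=
  ((qrem d (X t)) ^+ 2 + (d + d / 2) ^+ 2 * \1_offgrid t)%:E.

Definition err_bound1 (t : T) : \bar R :=
  \sum_(1 <= i <oo) ((i%:R * `|d| + w / 2) ^+ 2 *
    \1_(noise_tail (((i%:R *+ 2 - 1) * `|d| - w) / 2)) t)%:E.

Definition err_bound2 (t : T) : \bar R :=
  \sum_(2 <= i <oo) ((i%:R * d + d / 2) ^+ 2 *
    \1_(offgrid `&` noise_tail ((i%:R - 1) * `|d|)) t)%:E.

Lemma measurable_offgrid : measurable offgrid.
Proof. exact: measurable_funPTI (measurable_qrem_gt d (w / 2)). Qed.

Lemma measurable_noise_tail c : measurable (noise_tail c).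
Proof. exact: measurable_funPTI (measurable_normr_ge c). Qed.

Lemma prob_offgrid_le : P offgrid <= o%:E.
Proof. by rewrite /offgrid -not_in_cells_qrem. Qed.

Lemma prob_noise_tail c : (0 < c)%R -> P (noise_tail c) = 2%:E * gaussQ (c / sigma).
Proof.
by move=> c0; rewrite -normal_prob_normr_ge // -V_normal //; exact: measurable_normr_ge.
Qed.

Lemma prob_offgrid_noise_tail_le c : (0 < c)%R ->
  P (offgrid `&` noise_tail c) <= o%:E * (2%:E * gaussQ (c / sigma)).
Proof.
move=> c0; rewrite XV_indep ?prob_noise_tail //; last first.
- exact: measurable_normr_ge.
- exact: measurable_qrem_gt.
apply: lee_wpmul2r prob_offgrid_le.
by apply: mule_ge0 => //; exact: gaussQ_ge0.
Qed.

Let sqr_indic_ge0 (a : R) (A : set T) t : 0 <= (a ^+ 2 * \1_A t)%:E.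
Proof. by rewrite lee_fin mulr_ge0 ?sqr_ge0 // indicE. Qed.

Let measurable_sqr_indic (a : R) (A : set T) :
  measurable A -> measurable_fun setT (fun t => (a ^+ 2 * \1_A t)%:E).
Proof.
by move=> mA; apply/measurable_EFinP/measurable_funM => //; exact: measurable_indic.
Qed.

Lemma err_bound0_ge0 t : 0 <= err_bound0 t.
Proof. by rewrite lee_fin addr_ge0 ?sqr_ge0 // -lee_fin sqr_indic_ge0. Qed.

Lemma err_bound1_ge0 t : 0 <= err_bound1 t.
Proof. by apply: nneseries_ge0 => i _ _; exact: sqr_indic_ge0. Qed.

Lemma err_bound2_ge0 t : 0 <= err_bound2 t.
Proof. by apply: nneseries_ge0 => i _ _; exact: sqr_indic_ge0. Qed.

Lemma measurable_err_bound0 : measurable_fun setT err_bound0.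
Proof.
apply/measurable_EFinP/measurable_funD.
- by apply/measurable_funX/measurableT_comp; [exact: measurable_qrem|exact: measurable_funP].
- by apply: measurable_funM => //; apply: measurable_indic; exact: measurable_offgrid.
Qed.

Lemma measurable_err_bound1 : measurable_fun setT err_bound1.
Proof.
apply: measurable_nneseries_from => // i _.
exact/measurable_sqr_indic/measurable_noise_tail.
Qed.

Lemma measurable_err_bound2 : measurable_fun setT err_bound2.
Proof.
apply: measurable_nneseries_from => // i _.
by apply/measurable_sqr_indic/measurableI; [exact: measurable_offgrid|exact: measurable_noise_tail].
Qed.

Lemma sqr_err_le_err_bound t :
  ((X t - quant d (X t + V t)) ^+ 2)%:E <= err_bound0 t + err_bound1 t + err_bound2 t.
Proof.
have [in_cell|far] := leP `|qrem d (X t)|%R (w / 2)%R.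
  case: (sqr_quantD_err_in_cell _ _ _ (V t) d_neq0 in_cell) => [-> | [i i_gt0 [err_le tail]]].
    apply: lee_paddr (err_bound2_ge0 t) (lee_paddr (err_bound1_ge0 t) _).
    by rewrite lee_fin lerDl -lee_fin sqr_indic_ge0.
  apply: lee_paddr (err_bound2_ge0 t) (lee_paddl (err_bound0_ge0 t) _).
  rewrite /err_bound1; apply: le_trans (nneseries_ge_term _ i_gt0) => [|n _].
    by rewrite indicE mem_set // mulr1 lee_fin.
  exact: sqr_indic_ge0.
case: (sqr_quantD_err _ (X t) (V t) d_neq0) => [err_le | [i i_gt1 [err_le tail]]].
  apply: lee_paddr (err_bound2_ge0 t) (lee_paddr (err_bound1_ge0 t) _).
  rewrite lee_fin indicE mem_set // mulr1.
  by apply: le_trans err_le _; rewrite lerDr sqr_ge0.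
apply: lee_paddl (adde_ge0 (err_bound0_ge0 t) (err_bound1_ge0 t)) _.
rewrite /err_bound2; apply: le_trans (nneseries_ge_term _ i_gt1) => [|n _].
  by rewrite indicE mem_set ?mulr1 ?lee_fin.
exact: sqr_indic_ge0.
Qed.

Lemma mse_le_integral_err_bound :
  'E_P[fun t => ((X t - quant d (X t + V t)) ^+ 2)%R]
  <= \int[P]_t (err_bound0 t + err_bound1 t + err_bound2 t).
Proof.
rewrite unlock; apply: ge0_le_integral => //.
- by move=> t _; rewrite lee_fin sqr_ge0.
- apply/measurable_EFinP/measurable_funX/measurable_funB; first exact: measurable_funP.
  by apply: measurableT_comp; [exact: measurable_quant|exact: measurable_funD].
- by apply/emeasurable_funD/measurable_err_bound2/emeasurable_funD;
    [exact: measurable_err_bound0|exact: measurable_err_bound1].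
- by move=> t _; exact: sqr_err_le_err_bound.
Qed.

Lemma integral_err_bound :
  \int[P]_t (err_bound0 t + err_bound1 t + err_bound2 t) =
  \int[P]_t err_bound0 t + \int[P]_t err_bound1 t + \int[P]_t err_bound2 t.
Proof.
rewrite !ge0_integralD //.
- by move=> t _; exact: err_bound0_ge0.
- exact: measurable_err_bound0.
- by move=> t _; exact: err_bound1_ge0.
- exact: measurable_err_bound1.
- by move=> t _; apply: adde_ge0; [exact: err_bound0_ge0|exact: err_bound1_ge0].
- exact: emeasurable_funD measurable_err_bound0 measurable_err_bound1.
- by move=> t _; exact: err_bound2_ge0.
- exact: measurable_err_bound2.
Qed.

Lemma integral_err_bound0_le : \int[P]_t err_bound0 t <=
  'E_P[fun t => ((X t - quant d (X t)) ^+ 2)%R] + o%:E * ((d + d / 2) ^+ 2)%:E.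
Proof.
rewrite unlock /err_bound0; under eq_integral do rewrite EFinD.
rewrite ge0_integralD //; last 3 first.
- by move=> t _; rewrite lee_fin sqr_ge0.
- by apply/measurable_EFinP/measurable_funX/measurableT_comp;
    [exact: measurable_qrem|exact: measurable_funP].
- exact/measurable_sqr_indic/measurable_offgrid.
rewrite integral_cst_indic ?sqr_ge0 ?leeD2l //; last exact: measurable_offgrid.
rewrite /= muleC; apply: lee_wpmul2r; first by rewrite lee_fin sqr_ge0.
exact: prob_offgrid_le.
Qed.

Lemma integral_err_bound1 : \int[P]_t err_bound1 t =
  \sum_(1 <= i <oo) (((i%:R * `|d| + w / 2) ^+ 2 *+ 2)%:E
    * gaussQ (((i%:R *+ 2 - 1) * `|d| - w) / (sigma *+ 2))).
Proof.
rewrite integral_nneseries_from // => [|i _]; last first.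
  exact/measurable_sqr_indic/measurable_noise_tail.
rewrite eseries_cond [RHS]eseries_cond; apply: eq_eseriesr => i /andP[_ i_gt0].
have c_gt0 : (0 < ((i%:R *+ 2 - 1) * `|d| - w) / 2)%R.
  have i_ge1 : (1 <= i%:R :> R)%R by rewrite ler1n.
  rewrite divr_gt0 // subr_gt0 (lt_le_trans w_lt_d) // ler_peMl //.
  by rewrite mulr2n; lra.
rewrite integral_cst_indic ?sqr_ge0 //; last exact: measurable_noise_tail.
(* [/=] turns the measure coercion of [P] back into the probability one. *)
rewrite /= (prob_noise_tail _ c_gt0).
rewrite muleA -EFinM mulr_natr; congr (_ * gaussQ _).
by rewrite -mulr_natr; field; rewrite gt_eqF.
Qed.

Lemma integral_err_bound2_le : \int[P]_t err_bound2 t <=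
  o%:E * \sum_(2 <= i <oo) (((i%:R * d + d / 2) ^+ 2 *+ 2)%:E
    * gaussQ ((i%:R - 1) * `|d| / sigma)).
Proof.
rewrite integral_nneseries_from // => [|i _]; last first.
  by apply/measurable_sqr_indic/measurableI;
    [exact: measurable_offgrid|exact: measurable_noise_tail].
rewrite -nneseriesZl => [|i _]; last first.
  by rewrite mule_ge0 ?lee_fin ?mulrn_wge0 ?sqr_ge0 ?gaussQ_ge0.
rewrite eseries_cond [leRHS]eseries_cond; apply: lee_nneseries => [i _ _|i /andP[_ i_gt1]].
  by apply: integral_ge0 => t _; exact: sqr_indic_ge0.
have c_gt0 : (0 < (i%:R - 1) * `|d|)%R.
  by rewrite mulr_gt0 ?normr_gt0 // subr_gt0 ltr1n.
rewrite integral_cst_indic ?sqr_ge0 //; last first.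
  by apply: measurableI; [exact: measurable_offgrid|exact: measurable_noise_tail].
rewrite /=; apply: le_trans (lee_wpmul2l _ (prob_offgrid_noise_tail_le _ c_gt0)) _.
  by rewrite lee_fin sqr_ge0.
by rewrite muleCA [X in _ * X]muleA -EFinM mulr_natr.
Qed.

End noisy_quantization.

Theorem lemma6 (dT : measure_display) (T : measurableType dT) (R : realType)
  (P : probability T R) (X V : {RV P >-> R}) (sigma d w o : R) :
  0 < sigma ->
  (forall A : set R, measurable A -> distribution P V A = normal_prob 0 sigma A) ->
  indep2 P X V ->
  d != 0 -> 0 <= w -> 0 <= o -> w < `|d| ->
  le_df P X d w o ->
  ('E_P[fun t => ((X t - quant d (X t + V t)) ^+ 2)%R]
   <= 'E_P[fun t => ((X t - quant d (X t)) ^+ 2)%R]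
      + (\sum_(1 <= i <oo)
          (((i%:R * `|d| + w / 2) ^+ 2 *+ 2)%:E
           * gaussQ (((i%:R *+ 2 - 1) * `|d| - w) / (sigma *+ 2))))
      + o%:E * (((d + d / 2) ^+ 2)%:E
          + \sum_(2 <= i <oo)
              (((i%:R * d + d / 2) ^+ 2 *+ 2)%:E
               * gaussQ ((i%:R - 1) * `|d| / sigma))))%E.
Proof.
move=> sigma_gt0 V_normal XV_indep d_neq0 _ _ w_lt_d X_df.
apply: le_trans (mse_le_integral_err_bound d_neq0) _.
rewrite integral_err_bound (integral_err_bound1 sigma_gt0 V_normal); last exact: w_lt_d.
rewrite ge0_muleDr ?lee_fin ?sqr_ge0 //; last first.
  by apply: nneseries_ge0 => i _ _; rewrite mule_ge0 ?lee_fin ?mulrn_wge0 ?sqr_ge0 ?gaussQ_ge0.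
rewrite [leRHS]addeACA -addeA; apply: leeD; last apply: leeD => //.
- exact: integral_err_bound0_le.
- exact: integral_err_bound2_le.
Qed.
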